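(* Let $p$ be a prime. There is exactly one numerical semigroup $S$ of genus $p+1$ that is both reflective and symmetric, namely $S=\langle 2,7\rangle$ if $p=2$, and $S=\langle \{p\}\cup\{p+2,p+3,\dots,2p-1\}\rangle$ if $p$ is odd.
   Context: A numerical semigroup is a submonoid $S$ of $(\mathbb{N}_0,+)$ with finite complement; its genus is the number of elements of $\mathbb{N}_0\setminus S$ and $\mathrm{F}(S)$ is its largest gap. $\langle A\rangle$ denotes the set of finite $\mathbb{N}_0$-linear combinations of elements of $A$. $S$ is symmetric if for every $z\in\mathbb{Z}$ exactly one of $z$ and $\mathrm{F}(S)-z$ lies in $S$. A numerical semigroup $S$ of genus $g\ge1$ is called reflective if for every $z\in\{0,1,\dots,g-1\}$ exactly one of $z$ and $z+g$ belongs to $S$. *)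

From mathcomp Require Import all_boot all_order all_algebra.
Set Implicit Arguments. Unset Strict Implicit. Unset Printing Implicit Defensive.

Definition is_numsg (S : pred nat) : Prop :=
  [/\ S 0, (forall a b, S a -> S b -> S (a + b)) &
      exists N, forall n, N <= n -> S n].

Definition genus (S : pred nat) (g : nat) : Prop :=
  exists N, (forall n, N <= n -> S n) /\ count (predC S) (iota 0 N) = g.

Definition is_frobenius (S : pred nat) (f : nat) : Prop :=
  ~~ S f /\ (forall n, f < n -> S n).

Definition memZ (S : pred nat) (z : int) : bool :=
  match z with Posz n => S n | Negz _ => false end.

Definition symmetric_ns (S : pred nat) : Prop :=
  exists f, is_frobenius S f /\
    forall z : int, memZ S z (+) memZ S (Posz f - z)%R.

Definition reflective (S : pred nat) : Prop :=
  exists g, genus S g /\ 1 <= g /\ forall z, z < g -> S z (+) S (z + g).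

Definition in_gen (A : seq nat) (n : nat) : Prop :=
  exists c : seq nat, size c = size A /\
    n = \sum_(i < size A) nth 0 c i * nth 0 A i.

From mathcomp Require Import all_boot all_order all_algebra.
From mathcomp Require Import zify.

Set Implicit Arguments.
Unset Strict Implicit.
Unset Printing Implicit Defensive.

(* Write the genus as q + 1.  Reflectivity pairs each z <= q with z + q + 1,
   so all gaps lie below 2q + 2 and the Frobenius number f is at most 2q + 1;
   playing reflectivity against symmetry forces f = 2q + 1.  Then z <= q and
   z in S imply q - z in S.  In particular q is in S, and if m were a smallest
   element of S strictly between 0 and q, then q mod m = q - (q div m) m would
   be a smaller one, so m divides q; primality leaves m = 1, impossible.
   Reflectivity now determines S completely, and one checks directly that the
   resulting semigroup is generated by the stated set. *)

Definition reflsym_semigroup (p n : nat) : bool :=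
  [|| n == 0, n == p, (p + 2 <= n) && (n <= 2 * p) | 2 * p + 2 <= n].

Lemma count_iota_leq (a : pred nat) m n : m <= n ->
  count a (iota 0 m) <= count a (iota 0 n).
Proof. by move=> le_mn; rewrite -(subnKC le_mn) iotaD count_cat leq_addr. Qed.

Lemma count_gaps_stable (S : pred nat) N M :
  (forall n, N <= n -> S n) -> N <= M ->
  count (predC S) (iota 0 M) = count (predC S) (iota 0 N).
Proof.
move=> SN le_NM; rewrite -(subnKC le_NM) iotaD count_cat add0n.
suff -> : count (predC S) (iota N (M - N)) = 0 by rewrite addn0.
rewrite (@eq_in_count _ _ pred0) ?count_pred0 // => x.
by rewrite mem_iota => /andP[/SN Sx _]; rewrite /= Sx.
Qed.

Lemma genus_uniq S g1 g2 : genus S g1 -> genus S g2 -> g1 = g2.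
Proof.
move=> [N1 [SN1 <-]] [N2 [SN2 <-]].
rewrite -(count_gaps_stable SN1 (leq_maxl N1 N2)).
by rewrite -(count_gaps_stable SN2 (leq_maxr N1 N2)).
Qed.

Lemma count_gaps_reflective (S : pred nat) g :
  (forall z, z < g -> S z (+) S (z + g)) ->
  count (predC S) (iota 0 (g + g)) = g.
Proof.
move=> Srefl; rewrite iotaD count_cat add0n.
rewrite (_ : iota g g = map (addn g) (iota 0 g)) ?count_map; last by rewrite -iotaDl addn0.
rewrite (@eq_in_count _ (preim (addn g) (predC S)) S).
  by rewrite addnC count_predC size_iota.
move=> x; rewrite mem_iota add0n => /andP[_ /Srefl].
by rewrite /= (addnC g); case: (S x); case: (S (x + g)).
Qed.

Lemma reflective_conductor (S : pred nat) g : genus S g ->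
  (forall z, z < g -> S z (+) S (z + g)) -> forall n, g + g <= n -> S n.
Proof.
move=> [N [SN gapsN]] Srefl n le_n; apply/negPn/negP => nSn.
have := count_iota_leq (predC S) (leq_maxr N n.+1).
rewrite -addn1 iotaD count_cat /= nSn (count_gaps_stable SN (leq_maxl _ _)) gapsN.
have := count_iota_leq (predC S) le_n; rewrite count_gaps_reflective //; lia.
Qed.

Lemma sg_mulS (S : pred nat) : S 0 -> (forall a b, S a -> S b -> S (a + b)) ->
  forall k m, S m -> S (k * m).
Proof. by move=> S0 SD; elim=> [|k IHk] m Sm //; rewrite mulSn SD ?IHk. Qed.

Section ReflectiveSymmetric.

Variables (S : pred nat) (q f : nat).
Hypothesis S0 : S 0.
Hypothesis SD : forall a b, S a -> S b -> S (a + b).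
Hypothesis Sgenus : genus S q.+1.
Hypothesis Srefl : forall z, z < q.+1 -> S z (+) S (z + q.+1).
Hypothesis nSf : ~~ S f.
Hypothesis Sgtf : forall n, f < n -> S n.
Hypothesis Ssym : forall z, z <= f -> S z (+) S (f - z).

Lemma frobenius_reflective_symmetric : f = q + q.+1.
Proof.
have f_lt : f < q.+1 + q.+1.
  by rewrite ltnNge; apply/negP => /(reflective_conductor Sgenus Srefl); apply/negP.
have := Srefl (ltnSn q); case: (ltnP f q) => [lt_fq | le_qf].
  by rewrite !Sgtf //; lia.
case: (ltnP f (q + q.+1)) => [lt_f | ]; last by lia.
rewrite [S (q + _)]Sgtf // addbT => nSq.
have := Ssym le_qf; rewrite (negbTE nSq) /= => Sfq.
have lt_fq_q : f - q < q.+1 by lia.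
by have := Srefl lt_fq_q; rewrite Sfq Sgtf //; lia.
Qed.

Lemma reflective_symmetric_reflect z : z <= q -> S z -> S (q - z).
Proof.
move=> le_zq Sz; have lt_zq : z < q.+1 by lia.
have := Srefl lt_zq; rewrite Sz /= => nSzq.
have le_f : z + q.+1 <= f by rewrite frobenius_reflective_symmetric; lia.
have := Ssym le_f; rewrite (negbTE nSzq) frobenius_reflective_symmetric.
by rewrite (_ : _ - _ = q - z) //; lia.
Qed.

Lemma reflective_symmetric_mem : S q.
Proof. by rewrite -(subn0 q) reflective_symmetric_reflect. Qed.

Lemma reflective_symmetric_small_gaps : prime q -> forall z, 0 < z < q -> ~~ S z.
Proof.
move=> q_prime; elim/ltn_ind => m IHm /andP[m_gt0 lt_mq]; apply/negP => Sm.
have Sqm : S (q %% m).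
  rewrite (_ : q %% m = q - q %/ m * m); last by have := divn_eq q m; lia.
  by rewrite reflective_symmetric_reflect ?sg_mulS ?leq_trunc_div.
have dvd_mq : m %| q.
  rewrite /dvdn eqn0Ngt; apply/negP => r_gt0.
  have lt_r : q %% m < m := ltn_pmod q m_gt0.
  by have := IHm _ lt_r; rewrite r_gt0 (ltn_trans lt_r lt_mq) Sqm; move/(_ isT).
have [m_eq1 | ne_m1] := eqVneq m 1; last first.
  by move/(prime_nt_dvdP q_prime ne_m1): dvd_mq; lia.
by move: nSf; rewrite -[f]muln1 -m_eq1 sg_mulS.
Qed.

Lemma reflective_symmetric_structure : prime q -> S =1 reflsym_semigroup q.
Proof.
move=> q_prime n; have q_gt1 := prime_gt1 q_prime.
have low := reflective_symmetric_small_gaps q_prime.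
have Sq := reflective_symmetric_mem.
have Ef := frobenius_reflective_symmetric.
rewrite /reflsym_semigroup.
case: (posnP n) => [-> | n_gt0]; first by rewrite S0.
case: (ltngtP n q) => [lt_nq | lt_qn | ->]; last by rewrite Sq; lia.
  by rewrite (negbTE (low n _)); lia.
case: (ltngtP n (q + q.+1)) => [lt_n | gt_n | ->]; last 2 first.
- by rewrite Sgtf -?Ef //; lia.
- by rewrite -Ef (negbTE nSf); lia.
have [-> | ne_n] := eqVneq n q.+1.
  by have := Srefl (ltn0Sn q); rewrite S0 add0n => /negbTE ->; lia.
have lt_nq : 0 < n - q.+1 < q by lia.
have lt_nq1 : n - q.+1 < q.+1 by lia.
have := Srefl lt_nq1; rewrite (negbTE (low _ lt_nq)) subnK // addFb => ->; lia.
Qed.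

End ReflectiveSymmetric.

Lemma reflsym_semigroupD p : 1 < p -> forall a b,
  reflsym_semigroup p a -> reflsym_semigroup p b -> reflsym_semigroup p (a + b).
Proof. by move=> p_gt1 a b; rewrite /reflsym_semigroup; lia. Qed.

Lemma reflsym_semigroup_spec p : 1 < p ->
  [/\ is_numsg (reflsym_semigroup p), genus (reflsym_semigroup p) p.+1,
      reflective (reflsym_semigroup p) & symmetric_ns (reflsym_semigroup p)].
Proof.
move=> p_gt1.
have Trefl : forall z, z < p.+1 ->
    reflsym_semigroup p z (+) reflsym_semigroup p (z + p.+1).
  by move=> z; rewrite /reflsym_semigroup; lia.
have Tgenus : genus (reflsym_semigroup p) p.+1.
  exists (p.+1 + p.+1); split; last exact: count_gaps_reflective.
  by move=> n; rewrite /reflsym_semigroup; lia.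
split=> //; first split=> //.
- exact: reflsym_semigroupD.
- by exists (2 * p + 2) => n; rewrite /reflsym_semigroup; lia.
- by exists p.+1.
exists (2 * p + 1); split; first by split=> [| n]; rewrite /reflsym_semigroup; lia.
by case=> n; case Em: (Posz _ - _)%R => [m | m] /=; rewrite /reflsym_semigroup; lia.
Qed.

Lemma in_gen0 A : in_gen A 0.
Proof.
exists (nseq (size A) 0); rewrite size_nseq; split=> //.
by rewrite big1 // => i _; rewrite nth_nseq ltn_ord.
Qed.

Lemma in_genD A m n : in_gen A m -> in_gen A n -> in_gen A (m + n).
Proof.
move=> [c1 [_ ->]] [c2 [_ ->]].
exists (mkseq (fun i => nth 0 c1 i + nth 0 c2 i) (size A)).
rewrite size_mkseq -big_split; split=> //; apply: eq_bigr => i _.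
by rewrite nth_mkseq // mulnDl.
Qed.

Lemma in_gen_mem A a : a \in A -> in_gen A a.
Proof.
move=> aA; have iA : index a A < size A by rewrite index_mem.
exists (mkseq (fun i => nat_of_bool (i == index a A)) (size A)).
rewrite size_mkseq (bigD1 (Ordinal iA)) //= big1 ?addn0.
  by rewrite nth_mkseq // eqxx mul1n nth_index.
by move=> i /eqP ne_i; rewrite nth_mkseq //; case: eqP => // Ei; case: ne_i; apply: val_inj.
Qed.

Lemma in_gen_sub (S : pred nat) A : S 0 -> (forall a b, S a -> S b -> S (a + b)) ->
  all S A -> forall n, in_gen A n -> S n.
Proof.
move=> S0 SD SA n [c [_ ->]]; apply: (big_ind S) => // i _.
by apply: sg_mulS => //; apply: (allP SA); rewrite mem_nth.
Qed.

Lemma in_gen_descent (T : pred nat) A :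
  (forall n, T n -> 0 < n -> exists2 a, (a \in A) && (0 < a <= n) & T (n - a)) ->
  forall n, T n -> in_gen A n.
Proof.
move=> Tdesc; elim/ltn_ind => n IHn Tn; case: (posnP n) => [-> | n_gt0].
  exact: in_gen0.
have [a /and3P[aA a_gt0 le_an] Tna] := Tdesc n Tn n_gt0.
rewrite -(subnKC le_an); apply: in_genD; first exact: in_gen_mem.
by apply: IHn; lia.
Qed.

Definition reflsym_generators (p : nat) : seq nat :=
  if p == 2 then [:: 2; 7] else p :: iota (p + 2) (p - 2).

Lemma reflsym_generators_sub p : 1 < p ->
  all (reflsym_semigroup p) (reflsym_generators p).
Proof.
move=> p_gt1; rewrite /reflsym_generators; case: eqP => [-> // | _] /=.
by apply/andP; split; [|apply/allP => a]; rewrite ?mem_iota /reflsym_semigroup; lia.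
Qed.

Lemma reflsym_semigroup_gen p : 1 < p ->
  forall n, reflsym_semigroup p n -> in_gen (reflsym_generators p) n.
Proof.
move=> p_gt1; apply: in_gen_descent => n; rewrite /reflsym_generators.
case: eqP => [-> | ne_p2]; rewrite /reflsym_semigroup => Tn n_gt0.
  by have [-> | ne_n7] := eqVneq n 7; [exists 7 | exists 2]; rewrite ?inE; lia.
case: (boolP (n \in p :: iota (p + 2) (p - 2))) => [nA | ].
  by exists n; rewrite ?nA ?subnn; lia.
rewrite inE mem_iota => nA.
(* Subtract p, except from 3p + 1 = (p + 2) + (2p - 1), whose remainder 2p + 1 is a gap. *)
by have [-> | ne_n] := eqVneq n (3 * p + 1); [exists (p + 2) | exists p];
  rewrite ?inE ?mem_iota; lia.
Qed.

Theorem mainTheorem17 (p : nat) (hp : prime p) :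
  let A := if p == 2 then [:: 2; 7] else p :: iota (p + 2) (p - 2) in
  (exists S : pred nat,
      [/\ is_numsg S, genus S p.+1, reflective S & symmetric_ns S]) /\
  (forall S : pred nat,
      [/\ is_numsg S, genus S p.+1, reflective S & symmetric_ns S] ->
      forall n, S n <-> in_gen A n).
Proof.
move=> A; have p_gt1 := prime_gt1 hp.
split; first by exists (reflsym_semigroup p); apply: reflsym_semigroup_spec.
move=> S [[S0 SD _] Sgenus [g [Sgenus' [_ Srefl]]] [f [[nSf Sgtf] SsymZ]]] n.
move: Srefl; rewrite (genus_uniq Sgenus' Sgenus) => Srefl.
have Ssym : forall z, z <= f -> S z (+) S (f - z).
  by move=> z le_zf; have := SsymZ z; rewrite /= subzn.
rewrite (reflective_symmetric_structure S0 SD Sgenus Srefl nSf Sgtf Ssym hp n).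
split; first exact: reflsym_semigroup_gen.
apply: in_gen_sub; [by [] | exact: reflsym_semigroupD | exact: reflsym_generators_sub].
Qed.
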